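(* Let $d\ge 1$, let $\eta\in\mathcal{X}=\mathbb{N}^{\mathbb{Z}^d}$, and let $T,T'$ be two legal toppling procedures which are both finite for the initial configuration $\eta$. Then: 1. If $T$ is stabilizing for $\eta$, then $T'\preceq_\eta T$, i.e. $T'(\infty,x,\eta)\le T(\infty,x,\eta)$ for all $x\in\mathbb{Z}^d$. 2. If $T$ and $T'$ are both stabilizing for $\eta$, then $T'(\infty,x,\eta)=T(\infty,x,\eta)$ for all $x\in\mathbb{Z}^d$; in particular, for stabilizable $\eta$ the limit configuration $\eta_\infty=\eta-\Delta T(\infty,\cdot,\eta)$ does not depend on the choice of stabilizing legal toppling procedure. 3. If $\eta$ is stabilizable, then there does not exist a legal toppling procedure that is not finite for $\eta$. 4. If $T$ is stabilizing for $\eta$, then there is at least one site $x\in\mathbb{Z}^d$ with $T(\infty,x,\eta)=0$.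
   Context: Let $\mathcal{X}=\mathbb{N}^{\mathbb{Z}^d}$ be the set of height configurations; a configuration $\eta$ is stable if $\eta(x)\le 2d-1$ for all $x$, and site $x$ is unstable if $\eta(x)\ge 2d$. The toppling matrix is $\Delta_{x,y}=2d\mathbf{1}_{x=y}-\mathbf{1}_{|x-y|=1}$, and for $n:\mathbb{Z}^d\to\mathbb{N}$ we write $(\Delta n)(x)=\sum_y\Delta_{x,y}n(y)$. A toppling procedure is a measurable map $T:[0,\infty)\times\mathbb{Z}^d\times\mathcal{X}\to\mathbb{N}$ such that for every $\eta\in\mathcal{X}$: (a) $T(0,x,\eta)=0$ for all $x$; (b) for each $x$, $t\mapsto T(t,x,\eta)$ is right-continuous, nondecreasing, with jumps of size at most one; (c) for each $x$, there are finitely many jumps at $x$ in every finite time interval; (d) there is no infinite chain of topplings at sites $x_1,x_2,\dots$ occurring at times $t_1>t_2>\cdots$ with $x_{i+1}$ a neighbor of $x_i$ for all $i$. ($T(t,x,\eta)$ is the number of topplings at $x$ during $[0,t]$; site $x$ topples at time $t$ if $T(t-,x,\eta)<T(t,x,\eta)$.) The configuration at time $t$ is $\eta_t=\eta-\Delta T(t,\cdot,\eta)$. $T$ is legal if for all $\eta$, all $t>0$ and all $x$ toppling at time $t$, $\eta_{t-}(x)\ge 2d$. $T$ is finite for $\eta$ if $T(\infty,x,\eta):=\lim_{t\to\infty}T(t,x,\eta)<\infty$ for all $x$. A legal $T$ is stabilizing for $\eta$ if it is finite for $\eta$ and $\eta_\infty:=\eta-\Delta T(\infty,\cdot,\eta)$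 is stable. A configuration $\eta$ is stabilizable if there exists a legal toppling procedure that is stabilizing for $\eta$. *)

From Stdlib Require Import Reals.
From mathcomp Require Import all_boot all_order all_algebra.
Set Implicit Arguments. Unset Strict Implicit. Unset Printing Implicit Defensive.
Import Order.TTheory GRing.Theory Num.Theory.

Definition site (d : nat) := {ffun 'I_d -> int}.
Definition config (d : nat) := site d -> nat.

Definition shift d (x : site d) (i : 'I_d) (k : int) : site d :=
  [ffun j => (x j + (j == i)%:R * k)%R].

Definition adj d (x y : site d) : Prop := (\sum_(i < d) `|(x i - y i)%R|)%N = 1%N.

Definition nb_sum d (n : site d -> nat) (x : site d) : nat :=
  \sum_(i < d) (n (shift x i 1) + n (shift x i (-1))).

Definition laplacian d (n : site d -> nat) (x : site d) : int :=
  ((2 * d * n x)%:Z - (nb_sum n x)%:Z)%R.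

Definition after d (eta : config d) (n : site d -> nat) (x : site d) : int :=
  ((eta x)%:Z - laplacian n x)%R.

Definition stable d (c : site d -> int) : Prop :=
  forall x, (c x <= (2 * d - 1)%:Z)%R.

Definition procedure d := R -> site d -> config d -> nat.

Definition left_lim (f : R -> nat) (t : R) (L : nat) : Prop :=
  forall eps : R, Rlt 0 eps -> exists delta : R, Rlt 0 delta /\
    forall s : R, Rle 0 s -> Rlt (Rminus t delta) s -> Rlt s t ->
      Rlt (Rabs (Rminus (INR (f s)) (INR L))) eps.

Definition lim_infty (f : R -> nat) (L : nat) : Prop :=
  forall eps : R, Rlt 0 eps -> exists M : R,
    forall s : R, Rle M s -> Rlt (Rabs (Rminus (INR (f s)) (INR L))) eps.

Definition topples d (T : procedure d) (eta : config d) (t : R) (x : site d) : Prop :=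
  Rlt 0 t /\ exists L : nat, left_lim (fun s => T s x eta) t L /\ (L < T t x eta)%N.

(* Toppling procedure (measurability omitted) *)
Definition toppling_procedure d (T : procedure d) : Prop :=
  forall eta : config d,
  (forall x, T R0 x eta = 0%N) /\
  (forall x (s t : R), Rle 0 s -> Rle s t -> (T s x eta <= T t x eta)%N) /\
  (forall x (t : R), Rle 0 t -> forall eps : R, Rlt 0 eps ->
     exists delta : R, Rlt 0 delta /\ forall s : R, Rle t s -> Rlt s (Rplus t delta) ->
       Rlt (Rabs (Rminus (INR (T s x eta)) (INR (T t x eta)))) eps) /\
  (forall x (t : R) (L : nat), Rlt 0 t -> left_lim (fun s => T s x eta) t L ->
     (T t x eta <= L + 1)%N) /\
  (forall x (b : R), exists ts : seq R,
     forall t : R, Rle t b -> topples T eta t x -> List.In t ts) /\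
  ~ (exists (xs : nat -> site d) (ts : nat -> R),
       forall i : nat, topples T eta (ts i) (xs i) /\ Rlt (ts i.+1) (ts i)
                       /\ adj (xs i) (xs i.+1)).

Definition config_at d (T : procedure d) (eta : config d) (t : R) : site d -> int :=
  after eta (fun x => T t x eta).

Definition legal d (T : procedure d) : Prop :=
  forall (eta : config d) (t : R) (x : site d) (L : site d -> nat),
    Rlt 0 t ->
    (forall y, left_lim (fun s => T s y eta) t (L y)) ->
    (L x < T t x eta)%N ->
    ((2 * d)%:Z <= after eta L x)%R.

Definition final_counts d (T : procedure d) (eta : config d) (N : site d -> nat) : Prop :=
  forall x, lim_infty (fun s => T s x eta) (N x).

Definition finite_for d (T : procedure d) (eta : config d) : Prop :=
  forall x, exists n : nat, lim_infty (fun s => T s x eta) n.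

Definition stabilizing_for d (T : procedure d) (eta : config d) : Prop :=
  legal T /\ finite_for T eta /\
  forall N, final_counts T eta N -> stable (after eta N).

Definition stabilizable d (eta : config d) : Prop :=
  exists T : procedure d, toppling_procedure T /\ legal T /\ stabilizing_for T eta.

(* Least action principle: if [eta - Delta N] is stable, no legal procedure ever
   topples a site [x] more than [N x] times.  Otherwise look at a site whose
   [(N x + 1)]-th toppling occurs at some time [tau].  Just before [tau], legality
   says [x] carries at least [2d] particles while stability of [eta - Delta N]
   says it would carry at most [2d - 1] had its neighbours toppled only [N]
   times; hence some neighbour has already exceeded its quota strictly before
   [tau].  Iterating gives an infinite chain of topplings backwards in time along
   neighbours, which toppling procedures forbid.  The four statements follow:
   stabilizing procedures are maximal, hence all equal; any legal procedure is
   bounded by a stabilizing one, hence finite; and since [Delta] kills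
   constants, a stabilizing [N] that is positive everywhere could be lowered by
   one, contradicting its maximality. *)
From Stdlib Require Import Reals Lra Classical ClassicalEpsilon FunctionalExtensionality.
From mathcomp Require Import all_boot all_order all_algebra zify.
Set Implicit Arguments. Unset Strict Implicit. Unset Printing Implicit Defensive.
Import GRing.Theory.

Lemma INR_close_eq (a b : nat) : Rlt (Rabs (Rminus (INR a) (INR b))) 1 -> a = b.
Proof.
move=> H; case: (ltngtP a b) => // hab; exfalso.
- have /le_INR : (a.+1 <= b)%coq_nat by apply/ssrnat.leP.
  rewrite S_INR => h; move: H; rewrite Rabs_left1; lra.
- have /le_INR : (b.+1 <= a)%coq_nat by apply/ssrnat.leP.
  rewrite S_INR => h; move: H; rewrite Rabs_right; lra.
Qed.

Lemma exists_in_left_window (t del : R) : Rlt 0 t -> Rlt 0 del ->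
  exists s, Rle 0 s /\ Rlt (Rminus t del) s /\ Rlt s t.
Proof.
move=> ht hd; exists (Rminus t (Rdiv (Rmin del t) 2)).
have := Rmin_l del t; have := Rmin_r del t.
have : Rlt 0 (Rmin del t) by apply: Rmin_glb_lt.
lra.
Qed.

Lemma bounded_nat_fun_attains_max (S : R -> Prop) (f : R -> nat) (B : nat) :
  (exists s, S s) -> (forall s, S s -> (f s <= B)%N) ->
  exists s0, S s0 /\ forall s, S s -> (f s <= f s0)%N.
Proof.
move=> [s1 hs1] hB.
pose Q k := exists s, S s /\ (k <= f s)%N.
suff [k [[s0 [hs0 hk]] nk]] : exists k, Q k /\ ~ Q k.+1.
  exists s0; split=> // s hs; apply: leq_trans hk; rewrite leqNgt.
  by apply/negP => hlt; apply: nk; exists s.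
have : Q 0%N by exists s1.
have : ~ Q B.+1 by move=> [s [hs hBs]]; have := hB s hs; lia.
elim: B.+1 => [//|n IH] nQ Q0.
by case: (classic (Q n)) => Qn; [exists n | exact: IH].
Qed.

Lemma dependent_choice (A : Type) (P : A -> Prop) (Rel : A -> A -> Prop) (a0 : A) :
  P a0 -> (forall a, P a -> exists b, P b /\ Rel a b) ->
  exists u : nat -> A, forall n, P (u n) /\ Rel (u n) (u n.+1).
Proof.
move=> Pa0 step.
have [F HF] : exists F : A -> A, forall a, P a -> P (F a) /\ Rel a (F a).
  apply: (choice (fun a b => P a -> P b /\ Rel a b)) => a.
  case: (classic (P a)) => [/step [b hb] | nPa]; first by exists b.
  by exists a.
have Pu : forall n, P (iter n F a0) by elim=> [//|n IH]; exact: (HF _ IH).1.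
by exists (fun n => iter n F a0) => n; split=> //; exact: (HF _ (Pu n)).2.
Qed.

Section MonotoneCounter.
Variable f : R -> nat.
Hypothesis f_mono : forall s t, Rle 0 s -> Rle s t -> (f s <= f t)%N.

Lemma left_lim_exists t : Rlt 0 t -> exists L, left_lim f t L.
Proof.
move=> ht.
have nonempty : exists s, Rle 0 s /\ Rlt s t by exists R0; lra.
have bounded : forall s, Rle 0 s /\ Rlt s t -> (f s <= f t)%N.
  by move=> s [h0 hst]; apply: f_mono => //; lra.
have [s0 [[hs0 hs0t] hmax]] := bounded_nat_fun_attains_max nonempty bounded.
exists (f s0) => eps heps; exists (Rminus t s0); split; first lra.
move=> s h0 h1 h2.
have -> : f s = f s0.
  by apply/eqP; rewrite eqn_leq hmax ?f_mono //; lra.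
by rewrite Rminus_diag Rabs_R0.
Qed.

Lemma left_lim_locally_const t L : left_lim f t L -> exists del, Rlt 0 del /\
  forall s, Rle 0 s -> Rlt (Rminus t del) s -> Rlt s t -> f s = L.
Proof.
move=> /(_ R1 Rlt_0_1) [del [hdel hs]].
by exists del; split=> // s h0 h1 h2; apply: INR_close_eq; exact: hs.
Qed.

Lemma left_lim_unique t L1 L2 : Rlt 0 t -> left_lim f t L1 -> left_lim f t L2 -> L1 = L2.
Proof.
move=> ht /left_lim_locally_const [d1 [hd1 H1]] /left_lim_locally_const [d2 [hd2 H2]].
have [s [h0 [h1 h2]]] := exists_in_left_window ht (Rmin_glb_lt _ _ _ hd1 hd2).
have := Rmin_l d1 d2; have := Rmin_r d1 d2 => m2 m1.
by rewrite -(H1 s) -?(H2 s) //; lra.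
Qed.

Lemma lim_infty_attained L : lim_infty f L -> exists s, Rle 0 s /\ f s = L.
Proof.
move=> /(_ R1 Rlt_0_1) [M HM]; exists (Rmax M 0); split; first exact: Rmax_r.
by apply: INR_close_eq; apply: HM; exact: Rmax_l.
Qed.

Lemma bounded_monotone_lim_infty B :
  (forall s, Rle 0 s -> (f s <= B)%N) -> exists L, lim_infty f L.
Proof.
move=> hB; have nonempty : exists s, Rle 0 s by exists R0; lra.
have [s0 [hs0 hmax]] := bounded_nat_fun_attains_max nonempty hB.
exists (f s0) => eps heps; exists s0 => s hs.
have -> : f s = f s0 by apply/eqP; rewrite eqn_leq hmax ?f_mono //; lra.
by rewrite Rminus_diag Rabs_R0.
Qed.

Lemma sublevel_sup K t : (f R0 <= K)%N -> Rle 0 t -> (K < f t)%N ->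
  exists tau, Rle 0 tau /\ Rle tau t /\
    (forall s, Rle 0 s -> Rlt s tau -> (f s <= K)%N) /\ (forall s, Rlt tau s -> (K < f s)%N).
Proof.
move=> f0K ht hK.
pose A s := Rle 0 s /\ (f s <= K)%N.
have A_le_t : forall a, A a -> Rle a t.
  move=> a [ha1 ha2]; apply: Rnot_lt_le => hat.
  by have := f_mono ht (Rlt_le _ _ hat); lia.
have A_bounded : bound A by exists t.
have A0 : A R0 by split; [lra|].
have [tau [ub lub]] := completeness A A_bounded (ex_intro _ _ A0).
exists tau; split; first exact: ub.
split; first exact: lub.
split=> s.
- move=> h0 hs; case: (classic (exists a, A a /\ Rlt s a)) => [|hn].
    move=> [a [[ha1 ha2] hsa]]; have := f_mono h0 (Rlt_le _ _ hsa); lia.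
  suff : Rle tau s by lra.
  by apply: lub => a ha; apply: Rnot_lt_le => hsa; apply: hn; exists a.
- move=> hs; rewrite ltnNge; apply/negP => hsK.
  have /ub : A s by split=> //; have := ub _ A0; lra.
  lra.
Qed.

Hypothesis f0 : f R0 = 0%N.
Hypothesis f_right_cont : forall t, Rle 0 t -> forall eps, Rlt 0 eps ->
  exists delta, Rlt 0 delta /\ forall s, Rle t s -> Rlt s (Rplus t delta) ->
    Rlt (Rabs (Rminus (INR (f s)) (INR (f t)))) eps.
Hypothesis f_unit_jumps : forall t L, Rlt 0 t -> left_lim f t L -> (f t <= L + 1)%N.

Lemma right_cont_locally_const t : Rle 0 t -> exists del, Rlt 0 del /\
  forall s, Rle t s -> Rlt s (Rplus t del) -> f s = f t.
Proof.
move=> /f_right_cont /(_ R1 Rlt_0_1) [del [hdel hs]].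
by exists del; split=> // s h1 h2; apply: INR_close_eq; exact: hs.
Qed.

(* Unit jumps make the left limit at the crossing time exactly [K]. *)
Lemma first_passage K t : Rle 0 t -> (K < f t)%N ->
  exists tau, Rlt 0 tau /\ Rle tau t /\ left_lim f tau K /\ (K < f tau)%N.
Proof.
move=> ht hK.
have f0K : (f R0 <= K)%N by rewrite f0.
have [tau [tau0 [taut [below above]]]] := sublevel_sup f0K ht hK.
have taupos : Rlt 0 tau.
  case: (Rle_lt_or_eq_dec _ _ tau0) => // tau_eq0.
  have [d0 [hd0 H0]] := right_cont_locally_const (Rle_refl R0).
  have : (K < f (Rdiv d0 2))%N by apply: above; lra.
  by rewrite H0 ?f0 ?ltn0 //; lra.
have Ktau : (K < f tau)%N.
  have [d1 [hd1 H1]] := right_cont_locally_const tau0.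
  by rewrite -(H1 (Rplus tau (Rdiv d1 2))); [apply: above| |]; lra.
have [L HL] := left_lim_exists taupos.
have LK : (L <= K)%N.
  have [d2 [hd2 H2]] := left_lim_locally_const HL.
  have [s [h0 [h1 h2]]] := exists_in_left_window taupos hd2.
  by rewrite -(H2 s) //; apply: below.
have eL : L = K by have := f_unit_jumps taupos HL; lia.
by exists tau; split=> //; split=> //; split; first rewrite -eL.
Qed.

End MonotoneCounter.

Lemma adj_shift d (y : site d) i (k : int) : (k = 1 \/ k = -1)%R -> adj y (shift y i k).
Proof.
move=> hk; rewrite /adj (bigD1 i) //= big1 ?addn0.
  rewrite ffunE eqxx mul1r opprD addrA subrr add0r abszN.
  by case: hk => ->.
by move=> j hj; rewrite ffunE (negbTE hj) mul0r addr0 subrr.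
Qed.

Lemma nb_sum_addn_const d (n : site d -> nat) c x :
  nb_sum (fun y => n y + c)%N x = (nb_sum n x + 2 * d * c)%N.
Proof.
rewrite /nb_sum (eq_bigr (fun i => n (shift x i 1) + n (shift x i (-1)) + c.*2)%N).
  by rewrite big_split /= sum_nat_const card_ord -mul2n; lia.
by move=> i _; lia.
Qed.

Lemma after_addn_const d (eta : config d) (n : site d -> nat) c :
  after eta (fun y => n y + c)%N = after eta n.
Proof.
apply: functional_extensionality => x.
by rewrite /after /laplacian nb_sum_addn_const; lia.
Qed.

Section Procedure.
Variables (d : nat) (T : procedure d) (eta : config d).
Hypothesis T_proc : toppling_procedure T.

Lemma procedure_mono x s t : Rle 0 s -> Rle s t -> (T s x eta <= T t x eta)%N.
Proof. by have [_ [mono _]] := T_proc eta; exact: mono. Qed.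

Lemma procedure_left_lim_exists x t : Rlt 0 t ->
  exists L, left_lim (fun s => T s x eta) t L.
Proof. exact/left_lim_exists/procedure_mono. Qed.

Lemma procedure_first_passage x K t : Rle 0 t -> (K < T t x eta)%N ->
  exists tau, Rlt 0 tau /\ Rle tau t /\
    left_lim (fun s => T s x eta) tau K /\ (K < T tau x eta)%N.
Proof.
have [T0 [_ [rc [jump _]]]] := T_proc eta.
exact: first_passage (@procedure_mono x) (T0 x) (rc x) (jump x) K t.
Qed.

Section LeastAction.
Variable N : site d -> nat.
Hypothesis d_pos : (0 < d)%N.
Hypothesis T_legal : legal T.
Hypothesis N_stable : stable (after eta N).

Definition exceeds_at (p : site d * R) : Prop :=
  Rlt 0 p.2 /\ left_lim (fun s => T s p.1 eta) p.2 (N p.1) /\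
  (N p.1 < T p.2 p.1 eta)%N.

Lemma exceeds_at_neighbour_before y tau : exceeds_at (y, tau) ->
  exists z tau', exceeds_at (z, tau') /\ Rlt tau' tau /\ adj y z.
Proof.
move=> [/= htau [hly hNy]].
have [Lf HLf] : exists Lf : site d -> nat,
    forall z, left_lim (fun s => T s z eta) tau (Lf z).
  by apply: (choice (fun z L => left_lim _ tau L)) => z;
    exact: procedure_left_lim_exists.
have eLy : Lf y = N y := left_lim_unique htau (HLf y) hly.
have nb_lt : (nb_sum N y < nb_sum Lf y)%N.
  have hNy' : (Lf y < T tau y eta)%N by rewrite eLy.
  move: (T_legal htau HLf hNy') (N_stable y); rewrite /after /laplacian eLy.
  move: d_pos (eta y) (N y) (nb_sum N y) (nb_sum Lf y) => + a b c e; lia.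
have [i [k [hk hNz]]] : exists i k, (k = 1 \/ k = -1)%R /\
    (N (shift y i k) < Lf (shift y i k))%N.
  apply: NNPP => hn; move: nb_lt; rewrite ltnNge => /negP; apply.
  apply: leq_sum => i _; apply: leq_add; rewrite leqNgt; apply/negP => h; apply: hn.
  - by exists i, 1%R; split; [left|].
  - by exists i, (-1)%R; split; [right|].
set z := shift y i k.
have [del [hdel Hdel]] := left_lim_locally_const (HLf z).
have [s [s0 [s1 s2]]] := exists_in_left_window htau hdel.
have hz : (N z < T s z eta)%N by rewrite Hdel.
have [tau' [h1 [h2 [h3 h4]]]] := procedure_first_passage s0 hz.
exists z, tau'; split; first by split.
by split; [lra | exact: adj_shift].
Qed.

Theorem least_action x t : Rle 0 t -> (T t x eta <= N x)%N.
Proof.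
move=> ht; rewrite leqNgt; apply/negP => hN.
have [_ [_ [_ [_ [_ no_chain]]]]] := T_proc eta.
have [tau [h1 [_ [h3 h4]]]] := procedure_first_passage ht hN.
have [u Hu] : exists u : nat -> site d * R,
    forall n, exceeds_at (u n) /\ (Rlt (u n.+1).2 (u n).2 /\ adj (u n).1 (u n.+1).1).
  apply: (dependent_choice (Rel := fun p q => Rlt q.2 p.2 /\ adj p.1 q.1)
    (a0 := (x, tau))) => // [[y s]] hys.
  by have [z [s' [? ?]]] := exceeds_at_neighbour_before hys; exists (z, s').
apply: no_chain; exists (fun n => (u n).1), (fun n => (u n).2) => n.
have [[hpos [hll hlt]] [hdec hadj]] := Hu n.
by split=> //; split=> //; exists (N (u n).1).
Qed.

End LeastAction.

Lemma final_counts_le_of_stable N N' : (0 < d)%N -> legal T ->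
  stable (after eta N) -> final_counts T eta N' -> forall x, (N' x <= N x)%N.
Proof.
move=> d_pos T_legal N_stable HN' x.
have [s [hs <-]] := lim_infty_attained (HN' x).
exact: least_action.
Qed.

Lemma finite_of_stable N : (0 < d)%N -> legal T -> stable (after eta N) -> finite_for T eta.
Proof.
move=> d_pos T_legal N_stable x.
apply: (bounded_monotone_lim_infty (@procedure_mono x) (B := N x)) => s hs.
exact: least_action.
Qed.

Lemma final_counts_of_finite : finite_for T eta -> exists N, final_counts T eta N.
Proof. exact: choice. Qed.

Lemma stabilizing_final_counts_has_zero : (0 < d)%N -> legal T -> stabilizing_for T eta ->
  forall N, final_counts T eta N -> exists x, N x = 0%N.
Proof.
move=> d_pos T_legal [_ [_ Hs]] N HN; apply: NNPP => no_zero.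
have pos x : (0 < N x)%N by rewrite lt0n; apply/eqP => hx; apply: no_zero; exists x.
pose M x := (N x).-1.
have eNM : N = (fun x => M x + 1)%N.
  by apply: functional_extensionality => x; have := pos x; rewrite /M; lia.
have M_stable : stable (after eta M) by rewrite -(after_addn_const _ _ 1) -eNM; exact: Hs.
pose x0 : site d := [ffun=> 0%R].
have := final_counts_le_of_stable d_pos T_legal M_stable HN x0.
by have := pos x0; rewrite /M; lia.
Qed.

End Procedure.

Theorem theorem2p8 (d : nat) (eta : config d) (T T' : procedure d) :
  (0 < d)%N ->
  toppling_procedure T -> toppling_procedure T' ->
  legal T -> legal T' ->
  finite_for T eta -> finite_for T' eta ->
  (* 1 *)
  (stabilizing_for T eta ->
     forall N N', final_counts T eta N -> final_counts T' eta N' ->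
       forall x, (N' x <= N x)%N) /\
  (* 2 *)
  (stabilizing_for T eta -> stabilizing_for T' eta ->
     forall N N', final_counts T eta N -> final_counts T' eta N' ->
       (forall x, N' x = N x) /\ (forall x, after eta N' x = after eta N x)) /\
  (* 3 *)
  (stabilizable eta ->
     ~ exists T'' : procedure d,
         toppling_procedure T'' /\ legal T'' /\ ~ finite_for T'' eta) /\
  (* 4 *)
  (stabilizing_for T eta ->
     forall N, final_counts T eta N -> exists x, N x = 0%N).
Proof.
move=> d_pos HT HT' HL HL' _ _.
split; [|split; [|split]].
- move=> [_ [_ Hs]] N N' HN HN'.
  exact: (final_counts_le_of_stable HT' d_pos HL' (Hs N HN) HN').
- move=> [_ [_ Hs]] [_ [_ Hs']] N N' HN HN'.
  have eN : N' = N.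
    apply: functional_extensionality => x; apply/eqP; rewrite eqn_leq.
    rewrite (final_counts_le_of_stable HT' d_pos HL' (Hs N HN) HN').
    by rewrite (final_counts_le_of_stable HT d_pos HL (Hs' N' HN') HN).
  by rewrite eN.
- move=> [T0 [HT0 [_ [HL0 [FT0 Hs0]]]]] [T'' [HT'' [HL'' not_finite]]].
  have [N0 HN0] := final_counts_of_finite FT0.
  exact/not_finite/(finite_of_stable HT'' d_pos HL'' (Hs0 N0 HN0)).
- exact: stabilizing_final_counts_has_zero HT d_pos HL.
Qed.
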